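(* Let $\mathcal{M}$ be the class of monomorphisms $(f,\varphi)$ of $\mathbf{Sys}_0(L)$ (the full subcategory of $T_0$ affine systems) with $\varphi$ surjective. Then the Sierpinski affine system $\mathsf{S}$ is $\mathcal{M}$-injective in $\mathbf{Sys}_0(L)$: for every $(f,\varphi):C_1\to C_2$ in $\mathcal{M}$ and every morphism $(g,\psi):C_1\to\mathsf{S}$ in $\mathbf{Sys}_0(L)$ there is a morphism $(h,\theta):C_2\to\mathsf{S}$ with $(h,\theta)\circ(f,\varphi)=(g,\psi)$.
   Context: Fix a variety $\mathbf{A}$ of algebras (full subcategory of the category of $\Omega$-algebras and homomorphisms closed under products, subalgebras and homomorphic images) in which every algebra is non-empty, having set-indexed coproducts and a free algebra $S$ over a singleton $\{*\}$ with universal map $\eta:\{*\}\to|S|$; for an algebra $A$ and $a\in A$, $\overline{a}^A:S\to A$ is the unique homomorphism with $\eta( * )\mapsto a$. Fix an $\mathbf{A}$-algebra $L$ with more than one element; $L^X$ is the power algebra. An affine system is $(X,\kappa,A)$ with $X$ a set, $A$ an algebra, $\kappa:A\to L^X$ a homomorphism; a morphism $(f,\varphi):(X_1,\kappa_1,A_1)\to(X_2,\kappa_2,A_2)$ is a map $f:X_1\to X_2$ with a homomorphism $\varphi:A_2\to A_1$ such that $\kappa_1(\varphi(a))(x)=\kappa_2(a)(f(x))$ for all $a\in A_2,x\in X_1$; composition $(g,\psi)\circ(f,\varphi)=(g\circ f,\varphi\circ\psi)$. A system is $T_0$ if for all $x,y\in X$, $\kappa(a)(x)=\kappa(a)(y)$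 for all $a\in A$ implies $x=y$. The Sierpinski affine system is $\mathsf{S}=(|L|,\kappa_S,S)$ with $\kappa_S:S\to L^{|L|}$ the unique homomorphism with $\kappa_S(s)(b)=\overline{b}^L(s)$ (equivalently $\kappa_S(\eta( * ))=\mathrm{id}_L$). *)

Set Implicit Arguments.

Record signature := Signature { op : Type; arity : op -> Type }.

Record algebra (Om : signature) := Algebra {
  carrier :> Type;
  ops : forall o : op Om, (arity Om o -> carrier) -> carrier }.
Arguments ops {Om} _ _ _.

Definition is_hom {Om : signature} (A B : algebra Om) (f : A -> B) : Prop :=
  forall (o : op Om) (args : arity Om o -> A),
    f (ops A o args) = ops B o (fun i => f (args i)).

Definition prod_alg {Om : signature} {I : Type} (F : I -> algebra Om) : algebra Om :=
  {| carrier := forall i, F i;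
     ops := fun o args i => ops (F i) o (fun j => args j i) |}.

Definition pow_alg {Om : signature} (L : algebra Om) (X : Type) : algebra Om :=
  prod_alg (fun _ : X => L).

Definition op_closed {Om : signature} (A : algebra Om) (P : A -> Prop) : Prop :=
  forall (o : op Om) (args : arity Om o -> A),
    (forall i, P (args i)) -> P (ops A o args).

Definition sub_alg {Om : signature} (A : algebra Om) (P : A -> Prop)
  (H : op_closed A P) : algebra Om :=
  {| carrier := {x : A | P x};
     ops := fun o args =>
       exist P (ops A o (fun i => proj1_sig (args i)))
             (H o _ (fun i => proj2_sig (args i))) |}.

Record is_variety {Om : signature} (V : algebra Om -> Prop) : Prop := {
  var_prod : forall (I : Type) (F : I -> algebra Om),
      (forall i, V (F i)) -> V (prod_alg F);
  var_sub : forall (A : algebra Om) (P : A -> Prop) (H : op_closed A P),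
      V A -> (exists x, P x) -> V (sub_alg H);
  var_himg : forall (A B : algebra Om) (f : A -> B),
      V A -> is_hom A B f -> (forall b, exists a, f a = b) -> V B }.

(* S is the free V-algebra over a singleton, with eta( * ) = s0. *)
Definition is_free_on_one {Om : signature} (V : algebra Om -> Prop)
  (S : algebra Om) (s0 : S) : Prop :=
  V S /\
  forall (A : algebra Om), V A -> forall a : A,
    exists h : S -> A, is_hom S A h /\ h s0 = a /\
      forall h' : S -> A, is_hom S A h' -> h' s0 = a -> forall s, h' s = h s.

Record sys {Om : signature} (L : algebra Om) := Sys {
  sX : Type;
  sA : algebra Om;
  sk : sA -> (sX -> L);
  sk_hom : is_hom sA (pow_alg L sX) sk }.
Arguments sX {Om L} _.
Arguments sA {Om L} _.
Arguments sk {Om L} _ _ _.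

Definition is_T0 {Om} {L : algebra Om} (C : sys L) : Prop :=
  forall x y : sX C, (forall a : sA C, sk C a x = sk C a y) -> x = y.

Definition in_Sys0 {Om} (V : algebra Om -> Prop) {L : algebra Om} (C : sys L) : Prop :=
  V (sA C) /\ is_T0 C.

Definition is_mor {Om} {L : algebra Om} (C1 C2 : sys L)
  (f : sX C1 -> sX C2) (phi : sA C2 -> sA C1) : Prop :=
  is_hom (sA C2) (sA C1) phi /\
  forall (a : sA C2) (x : sX C1), sk C1 (phi a) x = sk C2 a (f x).

(* (f, phi) is a monomorphism in Sys_0(L): left-cancellable w.r.t. morphisms
   from T0 systems; composition (f,phi) o (u,alpha) = (f o u, alpha o phi);
   equality of morphisms is componentwise (pointwise) equality. *)
Definition is_mono_Sys0 {Om} (V : algebra Om -> Prop) {L : algebra Om}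
  (C1 C2 : sys L) (f : sX C1 -> sX C2) (phi : sA C2 -> sA C1) : Prop :=
  forall (D : sys L), in_Sys0 V D ->
  forall (u : sX D -> sX C1) (alpha : sA C1 -> sA D)
         (v : sX D -> sX C1) (beta : sA C1 -> sA D),
    is_mor D C1 u alpha -> is_mor D C1 v beta ->
    (forall x, f (u x) = f (v x)) ->
    (forall a, alpha (phi a) = beta (phi a)) ->
    (forall x, u x = v x) /\ (forall a, alpha a = beta a).

Definition sierpinski {Om} {L S : algebra Om} (kS : S -> (L -> L))
  (hkS : is_hom S (pow_alg L L) kS) : sys L :=
  {| sX := carrier L; sA := S; sk := kS; sk_hom := hkS |}.

(* A homomorphism theta : S -> A(C) yields the morphism (kappa(theta eta( * )), theta)
   from C to the Sierpinski system, because both sides of the compatibility condition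
   are homomorphisms out of the free algebra S that agree at eta( * ); conversely the
   space map of any such morphism (g, psi) is kappa(psi eta( * )). So (g, psi) extends
   along (f, phi) by lifting psi(eta( * )) through the surjection phi. *)

Lemma is_hom_comp {Om : signature} {A B C : algebra Om} {f : A -> B} {g : B -> C} :
  is_hom A B f -> is_hom B C g -> is_hom A C (fun a => g (f a)).
Proof.
  intros Hf Hg o args. rewrite Hf. apply Hg.
Qed.

Lemma is_hom_eval {Om : signature} {L : algebra Om} (C : sys L) (x : sX C) :
  is_hom (sA C) L (fun a => sk C a x).
Proof.
  intros o args. exact (f_equal (fun F => F x) (sk_hom C o args)).
Qed.

Section Sierpinski.

Context {Om : signature} {V : algebra Om -> Prop} {S : algebra Om} {s0 : S}.
Hypothesis HS : is_free_on_one V S s0.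

Lemma free_hom_eq (A : algebra Om) (h1 h2 : S -> A) :
  V A -> is_hom S A h1 -> is_hom S A h2 -> h1 s0 = h2 s0 -> forall s, h1 s = h2 s.
Proof.
  intros VA Hh1 Hh2 E s.
  destruct HS as [_ Hfree].
  destruct (Hfree A VA (h1 s0)) as [h [_ [_ Hu]]].
  rewrite (Hu h1 Hh1 eq_refl s). symmetry. apply Hu; auto.
Qed.

Context {L : algebra Om} {kS : S -> (L -> L)}.
Variable hkS : is_hom S (pow_alg L L) kS.
Hypothesis hkS0 : forall b : L, kS s0 b = b.

Lemma sierpinski_mor_space {C : sys L} {g : sX C -> L} {psi : S -> sA C} :
  is_mor C (sierpinski hkS) g psi -> forall x, g x = sk C (psi s0) x.
Proof.
  intros [_ Hgk] x. rewrite Hgk. symmetry. apply hkS0.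
Qed.

Lemma sierpinski_mor_of_hom {C : sys L} {theta : S -> sA C} :
  V L -> is_hom S (sA C) theta ->
  is_mor C (sierpinski hkS) (sk C (theta s0)) theta.
Proof.
  intros VL Htheta. split; [exact Htheta |].
  intros s x. simpl.
  apply (free_hom_eq L (fun s => sk C (theta s) x)
                    (fun s => kS s (sk C (theta s0) x)) VL).
  - exact (is_hom_comp Htheta (is_hom_eval C x)).
  - intros o args. exact (f_equal (fun F => F (sk C (theta s0) x)) (hkS o args)).
  - simpl. rewrite hkS0. reflexivity.
Qed.

End Sierpinski.

Theorem proposition13 (Om : signature) (V : algebra Om -> Prop)
  (HV : is_variety V) (Hne : forall A : algebra Om, V A -> inhabited A)
  (S : algebra Om) (s0 : S) (HS : is_free_on_one V S s0)
  (L : algebra Om) (HL : V L) (HL2 : exists a b : L, a <> b)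
  (kS : S -> (L -> L)) (hkS : is_hom S (pow_alg L L) kS)
  (hkS0 : forall b : L, kS s0 b = b)
  (C1 C2 : sys L) (H1 : in_Sys0 V C1) (H2 : in_Sys0 V C2)
  (f : sX C1 -> sX C2) (phi : sA C2 -> sA C1)
  (Hf : is_mor C1 C2 f phi) (Hmono : is_mono_Sys0 V C1 C2 f phi)
  (Hsurj : forall a1 : sA C1, exists a2 : sA C2, phi a2 = a1)
  (g : sX C1 -> L) (psi : S -> sA C1)
  (Hg : is_mor C1 (sierpinski hkS) g psi) :
  exists (h : sX C2 -> L) (theta : S -> sA C2),
    is_mor C2 (sierpinski hkS) h theta /\
    (forall x : sX C1, h (f x) = g x) /\
    (forall s : S, phi (theta s) = psi s).
Proof.
  destruct H1 as [V1 _], H2 as [V2 _], Hf as [Hphi Hfk].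
  destruct (Hsurj (psi s0)) as [a2 Ha2].
  destruct (proj2 HS (sA C2) V2 a2) as [theta [Htheta [Ht0 _]]].
  exists (sk C2 (theta s0)), theta.
  split; [| split].
  - exact (sierpinski_mor_of_hom HS hkS hkS0 HL Htheta).
  - intros x. rewrite <- Hfk, Ht0, Ha2.
    symmetry. exact (sierpinski_mor_space hkS hkS0 Hg x).
  - apply (free_hom_eq HS (sA C1) (fun s => phi (theta s)) psi V1).
    + exact (is_hom_comp Htheta Hphi).
    + exact (proj1 Hg).
    + rewrite Ht0. exact Ha2.
Qed.
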